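(* Consider the ODE system $$\frac{du}{dt}=a_1u-b_1u^2-c_1uv,\qquad \frac{dv}{dt}=\frac{a_2v}{1+ku}-b_2v^2-c_2uv,$$ with positive parameters $a_2,b_1,b_2,c_1,c_2$, $k\ge0$, and regard $a_1>0$ as the bifurcation parameter. Let $E_3=(0,\frac{a_2}{b_2})$. If $c_1\neq\frac{b_1b_2}{ka_2+c_2}$, then the system undergoes a transcritical bifurcation around $E_3$ at $$a_1=a_1^*=\frac{c_1a_2}{b_2}.$$ *)

From Stdlib Require Import Reals Lra.
From Coquelicot Require Import Coquelicot.
Open Scope R_scope.

Definition has_partials (f g : R -> R -> R -> R) (m u v : R) : Prop :=
  ex_derive (fun x => f m x v) u /\ ex_derive (fun y => f m u y) v /\
  ex_derive (fun x => g m x v) u /\ ex_derive (fun y => g m u y) v.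

Definition jac_det (f g : R -> R -> R -> R) (m u v : R) : R :=
  Derive (fun x => f m x v) u * Derive (fun y => g m u y) v
  - Derive (fun y => f m u y) v * Derive (fun x => g m x v) u.

Definition jac_tr (f g : R -> R -> R -> R) (m u v : R) : R :=
  Derive (fun x => f m x v) u + Derive (fun y => g m u y) v.

Definition in_box (u0 v0 r : R) (p : R * R) : Prop :=
  Rabs (fst p - u0) < r /\ Rabs (snd p - v0) < r.

(* Transcritical bifurcation of the family at the equilibrium (u0,v0) for
   the parameter value m0:
   - (u0,v0) is an equilibrium at m0 which is non-hyperbolic with a simple
     zero eigenvalue (det J = 0, tr J <> 0);
   - near (m0,(u0,v0)) the equilibrium set consists exactly of two distinct
     continuous branches b1, b2 of equilibria, both passing through (u0,v0)
     at m = m0 and existing on both sides of m0;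
   - exchange of stability: the critical eigenvalue changes sign along each
     branch as m crosses m0 (det J changes sign along b1), and for m <> m0
     the two branches have opposite stability type (det J of opposite signs). *)
Definition transcritical_bifurcation (f g : R -> R -> R -> R) (m0 u0 v0 : R) : Prop :=
  f m0 u0 v0 = 0 /\ g m0 u0 v0 = 0 /\
  jac_det f g m0 u0 v0 = 0 /\ jac_tr f g m0 u0 v0 <> 0 /\
  exists (d r : R) (b1 b2 : R -> R * R),
    0 < d /\ 0 < r /\
    b1 m0 = (u0, v0) /\ b2 m0 = (u0, v0) /\
    (forall m u v, Rabs (m - m0) < d -> in_box u0 v0 r (u, v) ->
        has_partials f g m u v) /\
    (forall m, Rabs (m - m0) < d ->
        continuous (fun t => fst (b1 t)) m /\ continuous (fun t => snd (b1 t)) m /\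
        continuous (fun t => fst (b2 t)) m /\ continuous (fun t => snd (b2 t)) m) /\
    (forall m, Rabs (m - m0) < d ->
        in_box u0 v0 r (b1 m) /\ in_box u0 v0 r (b2 m) /\
        (forall u v, in_box u0 v0 r (u, v) ->
           (f m u v = 0 /\ g m u v = 0 <-> (u, v) = b1 m \/ (u, v) = b2 m))) /\
    (forall m, Rabs (m - m0) < d -> m <> m0 -> b1 m <> b2 m) /\
    (forall m, Rabs (m - m0) < d -> m <> m0 ->
        jac_det f g m (fst (b1 m)) (snd (b1 m)) *
        jac_det f g m (fst (b2 m)) (snd (b2 m)) < 0) /\
    (forall m m', m0 - d < m < m0 -> m0 < m' < m0 + d ->
        jac_det f g m (fst (b1 m)) (snd (b1 m)) *
        jac_det f g m' (fst (b1 m')) (snd (b1 m')) < 0).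

Definition model_f (b1 c1 : R) (a1 u v : R) : R :=
  a1 * u - b1 * u ^ 2 - c1 * u * v.
Definition model_g (a2 b2 c2 k : R) (a1 u v : R) : R :=
  a2 * v / (1 + k * u) - b2 * v ^ 2 - c2 * u * v.

From Stdlib Require Import Reals Lra.
From Coquelicot Require Import Coquelicot.
Open Scope R_scope.

(* Away from the axis u = 0, an equilibrium near E3 = (0, a2/b2) lies on the
   v-nullcline v = (a2/(1+ku) - c2 u)/b2 and exists exactly when
   a1 = a1_of u := b1 u + c1 v.  Since a1_of 0 = a1* and
   b2 a1_of'(0) = b1 b2 - c1 (k a2 + c2) <> 0, a1_of is strictly monotone near 0,
   so for a1 near a1* the second branch is its unique small preimage, obtained
   explicitly as a root of a quadratic.  The Jacobian determinant equals
   -a2 (a1 - a1* ) at E3 and b2 u v a1_of'(u) on the second branch, and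
   monotonicity gives (a1_of u - a1* ) u a1_of'(u) > 0: the determinants have
   opposite signs. *)

Lemma sign_mul_self x : x <> 0 -> sign x * sign x = 1.
Proof.
  intro Hx. destruct (Rlt_or_le 0 x).
  - rewrite sign_eq_1 by lra. ring.
  - rewrite sign_eq_m1 by lra. ring.
Qed.

Lemma sign_mul_pos x : x <> 0 -> 0 < sign x * x.
Proof.
  intro Hx. destruct (Rlt_or_le 0 x).
  - rewrite sign_eq_1 by lra. lra.
  - rewrite sign_eq_m1 by lra. lra.
Qed.

Lemma locally_pos_of_continuous (f : R -> R) x :
  continuous f x -> 0 < f x -> locally x (fun y => 0 < f y).
Proof. intros Hf Hx. exact (Hf _ (open_gt 0 (f x) Hx)). Qed.

Lemma locally_near_of_continuous (f : R -> R) x (eps : posreal) :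
  continuous f x -> locally x (fun y => Rabs (f y - f x) < eps).
Proof. intro Hf. exact (Hf _ (locally_ball (f x) eps)). Qed.

(* The root of a x^2 + b x - c that vanishes with c, written without dividing
   by a so that it stays valid (and smooth) when a = 0. *)
Definition small_root (s a b c : R) : R :=
  2 * c / (b + s * sqrt (b ^ 2 + 4 * a * c)).

Lemma small_root_0 s a b : small_root s a b 0 = 0.
Proof. unfold small_root, Rdiv. ring. Qed.

Lemma small_root_denom_neq0 s a b c : s * s = 1 -> 0 < s * b ->
  b + s * sqrt (b ^ 2 + 4 * a * c) <> 0.
Proof.
  intros Hs Hb Z. pose proof (sqrt_pos (b ^ 2 + 4 * a * c)).
  assert (s * (b + s * sqrt (b ^ 2 + 4 * a * c)) = 0) by (rewrite Z; ring).
  nra.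
Qed.

Lemma small_root_spec s a b c : s * s = 1 -> 0 < s * b -> 0 <= b ^ 2 + 4 * a * c ->
  a * small_root s a b c ^ 2 + b * small_root s a b c - c = 0.
Proof.
  intros Hs Hb Hdisc. pose proof (small_root_denom_neq0 s a b c Hs Hb) as HD. unfold small_root.
  set (q := sqrt (b ^ 2 + 4 * a * c)) in *.
  assert (Hq : q * q = b ^ 2 + 4 * a * c) by (apply sqrt_sqrt; exact Hdisc).
  field_simplify; [| exact HD].
  replace (s ^ 2) with (s * s) by ring. replace (q ^ 2) with (q * q) by ring.
  rewrite Hs, Hq. unfold Rdiv. ring.
Qed.

Section Model.

Variables a2 b1 b2 c1 c2 k : R.
Hypotheses (a2_gt0 : 0 < a2) (b2_gt0 : 0 < b2).
Hypothesis nondegenerate : b1 * b2 <> c1 * (k * a2 + c2).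

Local Notation f := (model_f b1 c1).
Local Notation g := (model_g a2 b2 c2 k).

Definition v_nullcline u := (a2 / (1 + k * u) - c2 * u) / b2.
Definition a1_of u := b1 * u + c1 * v_nullcline u.
Definition a1_of' u := b1 - c1 * (a2 * k / (1 + k * u) ^ 2 + c2) / b2.
Definition a1_star := c1 * a2 / b2.

Lemma v_nullcline_0 : v_nullcline 0 = a2 / b2.
Proof. unfold v_nullcline. rewrite Rmult_0_r, Rplus_0_r. field. lra. Qed.

Lemma a1_of_0 : a1_of 0 = a1_star.
Proof. unfold a1_of, a1_star. rewrite v_nullcline_0. field. lra. Qed.

Lemma is_derive_a1_of u : 1 + k * u <> 0 -> is_derive a1_of u (a1_of' u).
Proof.
  intro Hu. unfold a1_of, v_nullcline, a1_of'. auto_derive.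
  - auto.
  - field. split; lra || auto.
Qed.

Lemma continuous_v_nullcline u : 1 + k * u <> 0 -> continuous v_nullcline u.
Proof.
  intro Hu. apply (ex_derive_continuous (K := R_AbsRing) (V := R_NormedModule)).
  unfold v_nullcline. auto_derive. auto.
Qed.

Lemma continuous_a1_of' u : 1 + k * u <> 0 -> continuous a1_of' u.
Proof.
  intro Hu. apply (ex_derive_continuous (K := R_AbsRing) (V := R_NormedModule)).
  unfold a1_of'. auto_derive. repeat split; lra || auto.
Qed.

Lemma a1_of'_0 : b2 * a1_of' 0 = b1 * b2 - c1 * (k * a2 + c2).
Proof. unfold a1_of'. field. lra. Qed.

Lemma a1_of'_0_neq0 : a1_of' 0 <> 0.
Proof. intro Z. apply nondegenerate. pose proof a1_of'_0 as E. rewrite Z in E. lra. Qed.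

Lemma Derive_f_u m u v : Derive (fun x => f m x v) u = m - 2 * b1 * u - c1 * v.
Proof. apply is_derive_unique. unfold model_f. auto_derive; [easy | ring]. Qed.

Lemma Derive_f_v m u v : Derive (fun y => f m u y) v = - c1 * u.
Proof. apply is_derive_unique. unfold model_f. auto_derive; [easy | ring]. Qed.

Lemma Derive_g_u m u v : 1 + k * u <> 0 ->
  Derive (fun x => g m x v) u = - (a2 * k * v) / (1 + k * u) ^ 2 - c2 * v.
Proof. intro Hu. apply is_derive_unique. unfold model_g. auto_derive; [tauto | field; auto]. Qed.

Lemma Derive_g_v m u v : 1 + k * u <> 0 ->
  Derive (fun y => g m u y) v = a2 / (1 + k * u) - 2 * b2 * v - c2 * u.
Proof. intro Hu. apply is_derive_unique. unfold model_g. auto_derive; [tauto | field; auto]. Qed.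

Lemma has_partials_model m u v : 1 + k * u <> 0 -> has_partials f g m u v.
Proof. intro Hu. unfold has_partials, model_f, model_g. repeat split; auto_derive; auto. Qed.

Lemma one_plus_k0 : 1 + k * 0 <> 0.
Proof. rewrite Rmult_0_r, Rplus_0_r. lra. Qed.

Lemma jac_det_E3 m : jac_det f g m 0 (a2 / b2) = - a2 * (m - a1_star).
Proof.
  unfold jac_det, a1_star.
  rewrite Derive_f_u, Derive_f_v, Derive_g_u, Derive_g_v by exact one_plus_k0.
  field. lra.
Qed.

Lemma jac_tr_E3 m : jac_tr f g m 0 (a2 / b2) = m - a1_star - a2.
Proof.
  unfold jac_tr, a1_star. rewrite Derive_f_u, Derive_g_v by exact one_plus_k0.
  field. lra.
Qed.

Lemma jac_det_interior u : 1 + k * u <> 0 ->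
  jac_det f g (a1_of u) u (v_nullcline u) = b2 * u * v_nullcline u * a1_of' u.
Proof.
  intro Hu. unfold jac_det.
  rewrite Derive_f_u, Derive_f_v, Derive_g_u, Derive_g_v by exact Hu.
  unfold a1_of, a1_of', v_nullcline. field. split; lra || auto.
Qed.

Lemma model_equilibriumP m u v : 1 + k * u <> 0 -> v <> 0 ->
  f m u v = 0 /\ g m u v = 0 <-> v = v_nullcline u /\ (u = 0 \/ a1_of u = m).
Proof.
  intros Hu Hv.
  assert (Ef : f m u v = u * (m - b1 * u - c1 * v)) by (unfold model_f; ring).
  assert (Eg : g m u v = v * b2 * (v_nullcline u - v))
    by (unfold model_g, v_nullcline; field; split; lra || auto).
  rewrite Ef, Eg. split.
  - intros [F G]. apply Rmult_integral in G. destruct G as [G | G].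
    + apply Rmult_integral in G. destruct G; lra.
    + assert (Hv' : v = v_nullcline u) by lra. split; [exact Hv' |].
      apply Rmult_integral in F. destruct F as [F | F]; [left; exact F | right].
      unfold a1_of. rewrite <- Hv'. lra.
  - intros [Hv' [Z | E]]; subst v.
    + subst u. split; ring.
    + unfold a1_of in E. split; [rewrite <- E |]; ring.
Qed.

Lemma jac_det_E3_exchange m m' : m < a1_star < m' ->
  jac_det f g m 0 (a2 / b2) * jac_det f g m' 0 (a2 / b2) < 0.
Proof.
  intros Hm. rewrite !jac_det_E3.
  assert (0 < a2 * a2 * ((a1_star - m) * (m' - a1_star))) by (apply Rmult_lt_0_compat; nra).
  nra.
Qed.

Definition slope_sign := sign (a1_of' 0).

Lemma slope_sign_sqr : slope_sign * slope_sign = 1.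
Proof. apply sign_mul_self, a1_of'_0_neq0. Qed.

Definition quad_a := (b1 * b2 - c1 * c2) * k.
Definition quad_b m := b1 * b2 - c1 * c2 - k * b2 * m.
Definition quad_c m := b2 * m - c1 * a2.
Definition quad_disc m := quad_b m ^ 2 + 4 * quad_a * quad_c m.

Definition branch m := small_root slope_sign quad_a (quad_b m) (quad_c m).

(* Multiplying a1_of u = m by b2 (1 + k u) gives exactly this quadratic in u. *)
Lemma a1_of_of_quadratic m u : 1 + k * u <> 0 ->
  quad_a * u ^ 2 + quad_b m * u - quad_c m = 0 -> a1_of u = m.
Proof.
  intros Hu Q.
  assert (E : b2 * (1 + k * u) * (a1_of u - m) = quad_a * u ^ 2 + quad_b m * u - quad_c m)
    by (unfold a1_of, v_nullcline, quad_a, quad_b, quad_c; field; split; lra || auto).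
  rewrite Q in E. apply Rmult_integral in E.
  destruct E as [E | E]; [apply Rmult_integral in E; destruct E; [lra | contradiction] | lra].
Qed.

Lemma box_exists : exists r : posreal, r <= a2 / b2 /\
  forall u, Rabs u < r -> 0 < 1 + k * u /\ 0 < slope_sign * a1_of' u.
Proof.
  assert (H1 : locally 0 (fun u => 0 < 1 + k * u)).
  { apply (locally_pos_of_continuous (fun u => 1 + k * u)).
    - apply (ex_derive_continuous (K := R_AbsRing) (V := R_NormedModule)). auto_derive. easy.
    - rewrite Rmult_0_r, Rplus_0_r. lra. }
  assert (H2 : locally 0 (fun u => 0 < slope_sign * a1_of' u)).
  { apply (locally_pos_of_continuous (fun u => slope_sign * a1_of' u)).
    - apply (continuous_scal_r slope_sign a1_of'). apply continuous_a1_of', one_plus_k0.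
    - apply sign_mul_pos, a1_of'_0_neq0. }
  destruct (filter_and _ _ H1 H2) as [eps Heps].
  assert (Hr : 0 < Rmin eps (a2 / b2))
    by (apply Rmin_pos; [apply cond_pos | apply Rdiv_lt_0_compat; lra]).
  exists (mkposreal _ Hr). simpl. split; [apply Rmin_r |].
  intros u Hu. apply Heps. change (Rabs (u - 0) < eps). rewrite Rminus_0_r.
  pose proof (Rmin_l eps (a2 / b2)). lra.
Qed.

Lemma quad_b_a1_star : quad_b a1_star = b2 * a1_of' 0.
Proof. rewrite a1_of'_0. unfold quad_b, a1_star. field. lra. Qed.

Lemma quad_c_a1_star : quad_c a1_star = 0.
Proof. unfold quad_c, a1_star. field. lra. Qed.

Lemma branch_a1_star : branch a1_star = 0.
Proof. unfold branch. rewrite quad_c_a1_star. apply small_root_0. Qed.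

Lemma ex_derive_branch m : 0 < quad_disc m -> 0 < slope_sign * quad_b m -> ex_derive branch m.
Proof.
  intros D S.
  pose proof (small_root_denom_neq0 _ quad_a _ (quad_c m) slope_sign_sqr S) as N.
  unfold branch, small_root, quad_disc, quad_a, quad_b, quad_c in *. auto_derive.
  split; [nra |]. split; [| exact I].
  (* auto_derive has expanded the power under sqrt; refold it to match N. *)
  match goal with |- context [sqrt ?X] => replace X with
    ((b1 * b2 - c1 * c2 - k * b2 * m) ^ 2 + 4 * ((b1 * b2 - c1 * c2) * k) * (b2 * m - c1 * a2))
    by ring end.
  intro Z. apply N. lra.
Qed.

Lemma quad_disc_pos_near : locally a1_star (fun m => 0 < quad_disc m).
Proof.
  apply locally_pos_of_continuous.
  - apply (ex_derive_continuous (K := R_AbsRing) (V := R_NormedModule)).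
    unfold quad_disc, quad_a, quad_b, quad_c. auto_derive. easy.
  - unfold quad_disc. rewrite quad_b_a1_star, quad_c_a1_star, Rmult_0_r, Rplus_0_r.
    apply pow2_gt_0, Rmult_integral_contrapositive. split; [lra | apply a1_of'_0_neq0].
Qed.

Lemma quad_b_sign_near : locally a1_star (fun m => 0 < slope_sign * quad_b m).
Proof.
  apply (locally_pos_of_continuous (fun m => slope_sign * quad_b m)).
  - apply (ex_derive_continuous (K := R_AbsRing) (V := R_NormedModule)).
    unfold quad_b. auto_derive. easy.
  - rewrite quad_b_a1_star.
    replace (slope_sign * (b2 * a1_of' 0)) with (b2 * (slope_sign * a1_of' 0)) by ring.
    apply Rmult_lt_0_compat; [lra | apply sign_mul_pos, a1_of'_0_neq0].
Qed.

Lemma continuous_branch_a1_star : continuous branch a1_star.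
Proof.
  apply (ex_derive_continuous (K := R_AbsRing) (V := R_NormedModule)).
  apply ex_derive_branch.
  - exact (locally_singleton _ _ quad_disc_pos_near).
  - exact (locally_singleton _ _ quad_b_sign_near).
Qed.

Section Box.

Variable r : R.
Hypotheses (r_gt0 : 0 < r) (r_le : r <= a2 / b2).
Hypothesis box : forall u, Rabs u < r -> 0 < 1 + k * u /\ 0 < slope_sign * a1_of' u.

Lemma box_neq0 u : Rabs u < r -> 1 + k * u <> 0.
Proof. intro Hu. pose proof (proj1 (box u Hu)). lra. Qed.

Lemma box_v_gt0 v : Rabs (v - a2 / b2) < r -> 0 < v.
Proof. intro Hv. apply Rabs_def2 in Hv. lra. Qed.

Lemma a1_of_strict_mono u1 u2 : Rabs u1 < r -> Rabs u2 < r -> u1 < u2 ->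
  slope_sign * a1_of u1 < slope_sign * a1_of u2.
Proof.
  intros H1 H2 H12. apply Rabs_def2 in H1. apply Rabs_def2 in H2.
  apply (incr_function (fun u => slope_sign * a1_of u) (- r) r (fun u => slope_sign * a1_of' u));
    simpl; try lra;
    intros x Hx1 Hx2; assert (Hx : Rabs x < r) by (apply Rabs_def1; lra).
  - apply is_derive_scal, is_derive_a1_of, box_neq0, Hx.
  - apply Rlt_gt, (proj2 (box x Hx)).
Qed.

Lemma a1_of_inj u1 u2 : Rabs u1 < r -> Rabs u2 < r -> a1_of u1 = a1_of u2 -> u1 = u2.
Proof.
  intros H1 H2 E. destruct (Rtotal_order u1 u2) as [L | [Q | L]]; [| exact Q |].
  - pose proof (a1_of_strict_mono u1 u2 H1 H2 L). rewrite E in H. lra.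
  - pose proof (a1_of_strict_mono u2 u1 H2 H1 L). rewrite E in H. lra.
Qed.

Lemma sign_a1_of_increment u : Rabs u < r -> u <> 0 ->
  0 < slope_sign * u * (a1_of u - a1_star).
Proof.
  intros Hu Hu0. rewrite <- a1_of_0. assert (H0 : Rabs 0 < r) by (rewrite Rabs_R0; lra).
  destruct (Rtotal_order u 0) as [L | [Z | L]]; [| contradiction |].
  - pose proof (a1_of_strict_mono u 0 Hu H0 L). nra.
  - pose proof (a1_of_strict_mono 0 u H0 Hu L). nra.
Qed.

Lemma box_equilibria m w u v : Rabs w < r -> a1_of w = m -> in_box 0 (a2 / b2) r (u, v) ->
  (f m u v = 0 /\ g m u v = 0 <-> (u, v) = (0, a2 / b2) \/ (u, v) = (w, v_nullcline w)).
Proof.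
  intros Hw Ew [Hu Hv]. simpl in Hu, Hv. rewrite Rminus_0_r in Hu.
  pose proof (box_v_gt0 v Hv).
  rewrite model_equilibriumP by (apply box_neq0, Hu || lra).
  split.
  - intros [-> [-> | E]].
    + left. rewrite v_nullcline_0. reflexivity.
    + right. rewrite (a1_of_inj u w Hu Hw) by congruence. reflexivity.
  - intros [E | E]; injection E as -> ->.
    + split; [symmetry; apply v_nullcline_0 | left; reflexivity].
    + split; [reflexivity | right; exact Ew].
Qed.

Lemma jac_det_branches_opposite w : Rabs w < r -> w <> 0 -> Rabs (v_nullcline w - a2 / b2) < r ->
  jac_det f g (a1_of w) 0 (a2 / b2) * jac_det f g (a1_of w) w (v_nullcline w) < 0.
Proof.
  intros Hw Hw0 Hv.
  rewrite jac_det_E3, jac_det_interior by (apply box_neq0, Hw).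
  pose proof (sign_a1_of_increment w Hw Hw0) as X. pose proof (proj2 (box w Hw)) as Y.
  pose proof (box_v_gt0 _ Hv) as V.
  set (x := slope_sign * w * (a1_of w - a1_star)) in X.
  set (y := slope_sign * a1_of' w) in Y.
  assert (E : a2 * b2 * v_nullcline w * x * y = slope_sign * slope_sign *
    (a2 * (a1_of w - a1_star) * (b2 * w * v_nullcline w * a1_of' w))) by (unfold x, y; ring).
  rewrite slope_sign_sqr, Rmult_1_l in E.
  assert (0 < a2 * b2 * v_nullcline w * x * y).
  { apply Rmult_lt_0_compat; [| exact Y]. apply Rmult_lt_0_compat; [| exact X].
    apply Rmult_lt_0_compat; [apply Rmult_lt_0_compat |]; assumption. }
  lra.
Qed.

Lemma branch_near : exists d : posreal, forall m, Rabs (m - a1_star) < d ->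
  continuous branch m /\ Rabs (branch m) < r /\ Rabs (v_nullcline (branch m) - a2 / b2) < r /\
  a1_of (branch m) = m.
Proof.
  assert (small : locally a1_star (fun m => Rabs (branch m) < r)).
  { generalize (locally_near_of_continuous _ _ (mkposreal r r_gt0) continuous_branch_a1_star).
    rewrite branch_a1_star. apply filter_imp. intros m. rewrite Rminus_0_r. auto. }
  assert (near_v : locally a1_star (fun m => Rabs (v_nullcline (branch m) - a2 / b2) < r)).
  { assert (C : continuous (fun m => v_nullcline (branch m)) a1_star).
    { apply continuous_comp; [exact continuous_branch_a1_star |].
      rewrite branch_a1_star. apply continuous_v_nullcline, one_plus_k0. }
    generalize (locally_near_of_continuous _ a1_star (mkposreal r r_gt0) C).
    simpl. rewrite branch_a1_star, v_nullcline_0. auto. }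
  destruct (filter_and _ _ (filter_and _ _ quad_disc_pos_near quad_b_sign_near)
                           (filter_and _ _ small near_v)) as [d Hd].
  exists d. intros m Hm. destruct (Hd m Hm) as [[D S] [Sm V]].
  split.
  { apply (ex_derive_continuous (K := R_AbsRing) (V := R_NormedModule)).
    apply ex_derive_branch; assumption. }
  split; [exact Sm |]. split; [exact V |].
  apply a1_of_of_quadratic; [apply box_neq0, Sm |].
  apply small_root_spec; [exact slope_sign_sqr | exact S | apply Rlt_le, D].
Qed.

Lemma model_transcritical_in_box : transcritical_bifurcation f g a1_star 0 (a2 / b2).
Proof.
  destruct branch_near as [d Hd].
  assert (branch_neq0 : forall m, Rabs (m - a1_star) < d -> m <> a1_star -> branch m <> 0).
  { intros m Hm Hne Z. apply Hne. destruct (Hd m Hm) as [_ [_ [_ E]]].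
    rewrite <- E, Z. apply a1_of_0. }
  split; [unfold model_f; ring |].
  split; [unfold model_g; rewrite Rmult_0_r, Rplus_0_r; field; lra |].
  split; [rewrite jac_det_E3; ring |].
  split; [rewrite jac_tr_E3; lra |].
  exists d, r, (fun _ => (0, a2 / b2)), (fun m => (branch m, v_nullcline (branch m))).
  split; [apply cond_pos |]. split; [exact r_gt0 |]. split; [reflexivity |].
  split; [rewrite branch_a1_star, v_nullcline_0; reflexivity |].
  split.
  { intros m u v _ [Hu _]. simpl in Hu. rewrite Rminus_0_r in Hu.
    apply has_partials_model, box_neq0, Hu. }
  split.
  { intros m Hm. destruct (Hd m Hm) as [C [S _]]. simpl.
    split; [apply continuous_const |]. split; [apply continuous_const |].
    split; [exact C |].
    apply continuous_comp; [exact C | apply continuous_v_nullcline, box_neq0, S]. }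
  split.
  { intros m Hm. destruct (Hd m Hm) as [_ [S [V E]]].
    split; [unfold in_box; simpl; rewrite Rminus_0_r, Rminus_eq_0, Rabs_R0; lra |].
    split; [unfold in_box; simpl; rewrite Rminus_0_r; lra |].
    intros u v. apply box_equilibria; assumption. }
  split.
  { intros m Hm Hne Z. injection Z as Z. apply (branch_neq0 m Hm Hne). auto. }
  split.
  { intros m Hm Hne. destruct (Hd m Hm) as [_ [S [V E]]]. simpl.
    pose proof (jac_det_branches_opposite (branch m) S (branch_neq0 m Hm Hne) V) as P.
    rewrite E in P. exact P. }
  intros m m' Hm Hm'. apply jac_det_E3_exchange. lra.
Qed.

End Box.

End Model.

Theorem mainTheorem13 (a2 b1 b2 c1 c2 k : R) :
  0 < a2 -> 0 < b1 -> 0 < b2 -> 0 < c1 -> 0 < c2 -> 0 <= k ->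
  c1 <> b1 * b2 / (k * a2 + c2) ->
  transcritical_bifurcation (model_f b1 c1) (model_g a2 b2 c2 k)
    (c1 * a2 / b2) 0 (a2 / b2).
Proof.
  intros Ha2 _ Hb2 _ Hc2 Hk Hne.
  assert (nondegenerate : b1 * b2 <> c1 * (k * a2 + c2)).
  { intro E. apply Hne. rewrite E. field. nra. }
  destruct (box_exists a2 b1 b2 c1 c2 k Ha2 Hb2 nondegenerate) as [r [r_le box]].
  exact (model_transcritical_in_box a2 b1 b2 c1 c2 k Ha2 Hb2 nondegenerate r (cond_pos r) r_le box).
Qed.
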